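(* Let $a_1,\dots,a_k>0$, let $K,L>0$, and let $Q_+=\{u\in\mathbb{C}:\mathrm{Re}\,u<-L,\ \mathrm{Im}\,u>-K\}$, $Q_-=\{u\in\mathbb{C}:\mathrm{Re}\,u<-L,\ \mathrm{Im}\,u<K\}$. Let $f$ be holomorphic on $Q_\pm$ with $|f(u)|\le M|u|^{-A}$ on $Q_\pm$ for some constant $M$, and assume $A>k$. Then the series $$F_\pm(u)=(\mp1)^k\sum_{m_1,\dots,m_k>0}f\Big(u\pm2\pi i(a_1m_1+\cdots+a_km_k)\mp\pi i(a_1+\cdots+a_k)\Big)$$ converges and solves on $Q_\pm$ the difference equation $\Delta_{a_1,\dots,a_k}F_\pm=f$. Moreover, for every $B<A-k$ there is a constant $M_{A-k-B}$ such that $|F_\pm(u)|\le M_{A-k-B}|u|^{-B}$ on $Q_\pm$.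
   Context: $\Delta_af(u)=f(u+ia\pi)-f(u-ia\pi)$ and $\Delta_{a_1,\dots,a_k}=\Delta_{a_1}\circ\cdots\circ\Delta_{a_k}$. *)

From HB Require Import structures.
From mathcomp Require Import all_boot all_order all_algebra.
From mathcomp Require Import complex.
From mathcomp Require Import all_classical all_reals all_analysis.
Set Implicit Arguments. Unset Strict Implicit. Unset Printing Implicit Defensive.
Import Order.TTheory GRing.Theory Num.Theory.
Import numFieldNormedType.Exports.
Import numFieldTopology.Exports.
Local Open Scope ring_scope.

(* R[i] is a numClosedFieldType; equip it with its norm topology and its
   structure of normed module over itself (as mathcomp-analysis does for any
   abstract numFieldType), so that limits and complex derivatives make sense. *)
HB.instance Definition _ (R : rcfType) := PseudoPointedMetric.copy R[i] (R[i])^o.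
HB.instance Definition _ (R : rcfType) := GRing.ComAlgebra.copy R[i] (R[i])^o.
HB.instance Definition _ (R : rcfType) := Vector.copy R[i] (R[i])^o.
HB.instance Definition _ (R : rcfType) := NormedModule.copy R[i] (R[i])^o.

Local Open Scope complex_scope.

Definition cmod (R : realType) (z : R[i]) : R := Normc.normc z.

Definition Delta (R : realType) (a : R) (F : R[i] -> R[i]) (u : R[i]) : R[i] :=
  F (u + 'i * (a * pi)%:C) - F (u - 'i * (a * pi)%:C).

Definition Deltas (R : realType) (a : seq R) (F : R[i] -> R[i]) : R[i] -> R[i] :=
  foldr (@Delta R) F a.

Definition sgn (R : realType) (s : bool) : R := if s then 1 else -1.

(* Q_+ (s = true) and Q_- (s = false) *)
Definition Qpm (R : realType) (s : bool) (K L : R) (u : R[i]) : Prop :=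
  @complex.Re R u < - L /\ (if s then - K < @complex.Im R u else @complex.Im R u < K).

(* the general term of the series, at multi-index m = (m_1,...,m_k), m_j >= 1 *)
Definition term (R : realType) (k : nat) (a : 'I_k -> R) (s : bool)
    (f : R[i] -> R[i]) (u : R[i]) (m : 'I_k -> nat) : R[i] :=
  ((- sgn R s) ^+ k)%:C *
  f (u + ((sgn R s) * 2 * pi * \sum_(j < k) a j * (m j)%:R)%:C * 'i
       - ((sgn R s) * pi * \sum_(j < k) a j)%:C * 'i).

(* partial sum over the box  1 <= m_j <= N  for all j *)
Definition boxsum (R : realType) (k : nat) (g : ('I_k -> nat) -> R[i]) (N : nat)
  : R[i] :=
  \sum_(m : {ffun 'I_k -> 'I_N}) g (fun j => (m j : nat).+1).

Definition boxsum_abs (R : realType) (k : nat) (g : ('I_k -> nat) -> R[i])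
  (N : nat) : R :=
  \sum_(m : {ffun 'I_k -> 'I_N}) cmod (g (fun j => (m j : nat).+1)).

Definition Fpm (R : realType) (k : nat) (a : 'I_k -> R) (s : bool)
    (f : R[i] -> R[i]) (u : R[i]) : R[i] :=
  limn (boxsum (term a s f u)).

From HB Require Import structures.
From mathcomp Require Import all_boot all_order all_algebra.
From mathcomp Require Import complex.
From mathcomp Require Import all_classical all_reals all_analysis.
From mathcomp Require Import ring lra.
Import Order.TTheory GRing.Theory Num.Theory.
Import numFieldNormedType.Exports.
Local Open Scope classical_set_scope.
Local Open Scope ring_scope.
Local Open Scope complex_scope.

(* Each term of the series is [f] at a vertical translate [u + i s y(m)] of
   [u], with [y(m) >= pi a_j m_j] for every [j].  Since [Re u < -L] and the
   move is away from the excluded half-plane, [|u + i s y|] is comparable to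
   [|u| + y], so the term is at most [C |u|^-B prod_j m_j^-((A-B)/k)];
   for [B < A - k] the exponent [(A-B)/k] exceeds 1 and the product of
   p-series is finite.  This gives absolute convergence and the decay bound.
   Applying [Delta_{a_1}] to the sum over [m_1 <= N] telescopes, leaving the
   [(k-1)]-fold sum at [u] minus the one at [u + 2 pi i s a_1 N], which tends
   to 0 by the decay bound; induction on [k] gives the difference equation
   for the partial sums, and the finitely many evaluations in
   [Delta_{a_1,...,a_k}] commute with the limit. *)

Local Notation Re := (@complex.Re _).
Local Notation Im := (@complex.Im _).

Section ComplexNumbers.
Context {R : realType}.
Implicit Types z w : R[i].

Lemma cmodE z : cmod z = Num.sqrt (Re z ^+ 2 + Im z ^+ 2).
Proof. by case: z. Qed.

Lemma normC_cmod z : `|z| = (cmod z)%:C.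
Proof. by rewrite normc_def cmodE. Qed.

Lemma cmod_ge0 z : 0 <= cmod z.
Proof. by rewrite cmodE sqrtr_ge0. Qed.

Lemma normRe_le_cmod z : `|Re z| <= cmod z.
Proof. by rewrite cmodE -sqrtr_sqr; apply: ler_wsqrtr; rewrite lerDl sqr_ge0. Qed.

Lemma normIm_le_cmod z : `|Im z| <= cmod z.
Proof. by rewrite cmodE -sqrtr_sqr; apply: ler_wsqrtr; rewrite lerDr sqr_ge0. Qed.

Lemma cmod_le_normReIm z : cmod z <= `|Re z| + `|Im z|.
Proof.
rewrite cmodE -[X in _ <= X]ger0_norm ?addr_ge0 // -sqrtr_sqr.
apply: ler_wsqrtr; rewrite sqrrD !real_normK ?num_real //.
by rewrite -addrA lerD2l lerDr mulrn_wge0 // mulr_ge0.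
Qed.

Lemma cmodC (x : R) : cmod x%:C = `|x|.
Proof. by rewrite cmodE /= expr0n /= addr0 sqrtr_sqr. Qed.

Lemma cmodM z w : cmod (z * w) = cmod z * cmod w.
Proof. exact: Normc.normcM. Qed.

Lemma cmodN z : cmod (- z) = cmod z.
Proof. by case: z => x y; rewrite /= !sqrrN. Qed.

Lemma ler_cmodD z w : cmod (z + w) <= cmod z + cmod w.
Proof. by rewrite -lecR -!normC_cmod rmorphD /= -!normC_cmod ler_normD. Qed.

Lemma ler_cmod_sum (I : finType) (P : pred I) (F : I -> R[i]) :
  cmod (\sum_(i | P i) F i) <= \sum_(i | P i) cmod (F i).
Proof.
elim/big_ind2: _ => [|x1 x2 y1 y2 h1 h2|//]; first by rewrite cmodC normr0.
exact: le_trans (ler_cmodD _ _) (lerD h1 h2).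
Qed.

Lemma ReB z w : Re (z - w) = Re z - Re w. Proof. by case: z; case: w. Qed.
Lemma ImB z w : Im (z - w) = Im z - Im w. Proof. by case: z; case: w. Qed.

End ComplexNumbers.

Section VerticalShift.
Context {R : realType}.
Implicit Types (u : R[i]) (p q t : R).

Definition vshift u t : R[i] := u + t%:C * 'i.

Lemma Re_vshift u t : Re (vshift u t) = Re u.
Proof. by case: u => x y /=; rewrite mulr0 mul0r subrr addr0. Qed.

Lemma Im_vshift u t : Im (vshift u t) = Im u + t.
Proof. by case: u => x y /=; rewrite mulr1 mul0r addr0. Qed.

Lemma vshift0 u : vshift u 0 = u.
Proof. by rewrite /vshift mul0r addr0. Qed.

Lemma vshiftD u p q : vshift (vshift u p) q = vshift u (p + q).
Proof. by rewrite /vshift rmorphD /=; ring. Qed.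

Lemma DeltaE b (F : R[i] -> R[i]) u :
  Delta b F u = F (vshift u (b * pi)) - F (vshift u (- (b * pi))).
Proof. by rewrite /Delta /vshift rmorphN /= mulNr mulrC. Qed.

End VerticalShift.

Section ComplexLimits.
Context {R : realType}.
Implicit Types v : nat -> R[i].

Lemma cvgn_cmodP v l :
  (v @ \oo --> l) <-> forall e : R, 0 < e -> \forall n \near \oo, cmod (l - v n) < e.
Proof.
split=> [/cvgrPdist_lt H e e0|H].
  have : (0 : R[i]) < e%:C by rewrite ltcE /= eqxx e0.
  by move=> /H; apply: filterS => n; rewrite normC_cmod ltcE /= => /andP[].
apply/cvgrPdist_lt => e; rewrite ltcE /= => /andP[/eqP eI e0].
by apply: filterS (H _ e0) => n hn; rewrite normC_cmod ltcE /= hn eI eqxx.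
Qed.

Lemma cvgn_ReIm v (X Y : R) :
  (fun n => Re (v n)) @ \oo --> X -> (fun n => Im (v n)) @ \oo --> Y ->
  v @ \oo --> X +i* Y.
Proof.
move=> /cvgrPdist_lt hX /cvgrPdist_lt hY; apply/cvgn_cmodP => e e0.
have e2 : 0 < e / 2 by rewrite divr_gt0.
apply: filterS2 (hX _ e2) (hY _ e2) => n h1 h2.
apply: le_lt_trans (cmod_le_normReIm _) _; rewrite ReB ImB /=.
by rewrite [e]splitr ltrD.
Qed.

Lemma cmod_limn_le v l (b : R) :
  v @ \oo --> l -> (forall n, cmod (v n) <= b) -> cmod l <= b.
Proof.
move=> /cvgn_cmodP h hb; apply/ler_addgt0Pr => e e0.
have [N _ hN] := h _ e0.
have := ler_cmodD (l - v N) (v N); rewrite subrK.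
by move: (hN N (leqnn N)) (hb N); lra.
Qed.

End ComplexLimits.

(* [x + b] and [b] are both nondecreasing and bounded. *)
Lemma cvgn_dominated_increments {R : realType} (x b : nat -> R) :
  (forall N N', (N <= N')%N -> `|x N' - x N| <= b N' - b N) ->
  (exists Bd, forall N, b N <= Bd) -> cvgn x.
Proof.
move=> H [Bd hB].
have b_incr : {homo b : n m / (n <= m)%N >-> n <= m}.
  by move=> n m /H h; rewrite -subr_ge0; exact: le_trans h.
have cb : cvgn b.
  by apply: nondecreasing_is_cvgn => //; exists Bd => _ [n _ <-].
have cxb : cvgn (fun n => x n + b n).
  apply: nondecreasing_is_cvgn.
    move=> n m nm; have := H _ _ nm; have := ler_norm (- (x m - x n)).
    by rewrite normrN -subr_ge0; lra.
  exists (x 0%N + Bd + Bd - b 0%N) => _ [n _ <-].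
  by have := H _ _ (leq0n n); have := hB n; have := ler_norm (x n - x 0%N); lra.
have -> : x = (fun n => (x n + b n) - b n) by apply: funext => n; rewrite addrK.
exact: is_cvgB.
Qed.

Section RealPowers.
Context {R : realType}.
Implicit Types x y r q : R.

Lemma ler_powRN {x y r} : 0 < x -> x <= y -> 0 <= r -> y `^ (- r) <= x `^ (- r).
Proof.
move=> x0 xy r0; rewrite !powRN lef_pV2 ?posrE ?powR_gt0 //; last exact: lt_le_trans xy.
by apply: ge0_ler_powR => //; rewrite nnegrE ltW // (lt_le_trans x0).
Qed.

Lemma powRN_small r e : 0 < r -> 0 < e ->
  exists T0, 0 < T0 /\ forall T, T0 <= T -> T `^ (- r) <= e.
Proof.
move=> r0 e0; have T00 : 0 < e `^ (- r^-1) by exact: powR_gt0.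
exists (e `^ (- r^-1)); split => // T hT.
apply: (le_trans (ler_powRN T00 hT (ltW r0))).
by rewrite -powRrM mulrNN mulVf ?gt_eqF // powRr1 // ltW.
Qed.

Lemma prod_powR_const k y q : 0 <= y -> \prod_(j < k) y `^ q = y `^ (q * k%:R).
Proof.
by move=> y0; rewrite prodr_const card_ord -powR_mulrn ?powR_ge0 // -powRrM.
Qed.

Lemma sum_geometric_le r J : 0 <= r < 1 -> \sum_(j < J) r ^+ j <= (1 - r)^-1.
Proof.
case/andP=> r0 r1; have r1' : 0 < 1 - r by rewrite subr_gt0.
have E : (\sum_(j < J) r ^+ j) * (1 - r) = 1 - r ^+ J.
  elim: J => [|J IH]; first by rewrite big_ord0 mul0r expr0 subrr.
  by rewrite big_ord_recr /= mulrDl IH exprS; ring.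
by rewrite -(ler_pM2r r1') mulVf ?gt_eqF // E lerBlDr lerDl exprn_ge0.
Qed.

(* Cauchy condensation: the block [2^J <= n < 2^(J+1)] contributes at most
   [(2^(1-q))^J]. *)
Lemma psum_powRN_bounded q : 1 < q ->
  exists Z, forall N, \sum_(i < N) ((i.+1)%:R : R) `^ (- q) <= Z.
Proof.
move=> q1; set r := (2 : R) `^ (1 - q).
have r0 : 0 <= r by exact: powR_ge0.
have r1 : r < 1.
  have e2 : (2 : R) = expR (ln 2) by rewrite lnK // posrE.
  rewrite /r e2 -expRM expR_lt1 pmulr_rlt0 ?ln_gt0 ?ltr1n //; lra.
set c := fun n : nat => (n%:R : R) `^ (- q).
have block J : \sum_(2 ^ J <= n < 2 ^ J.+1) c n <= r ^+ J.
  have p0 : (0 : R) < (2 ^ J)%:R by rewrite ltr0n expn_gt0.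
  apply: (@le_trans _ _ (\sum_(2 ^ J <= n < 2 ^ J.+1) c (2 ^ J)%N)).
    apply: ler_sum_nat => n /andP[h1 _]; apply: ler_powRN => //; last lra.
    by rewrite ler_nat.
  rewrite sumr_const_nat.
  have -> : (2 ^ J.+1 - 2 ^ J = 2 ^ J)%N by rewrite expnS mul2n -addnn addnK.
  rewrite -mulr_natl /c.
  have -> : ((2 ^ J)%:R : R) * (2 ^ J)%:R `^ (- q) = (2 ^ J)%:R `^ (1 - q).
    have := @powRD R ((2 ^ J)%:R) 1 (- q).
    by rewrite (gt_eqF p0) implybT => /(_ isT) ->; rewrite powRr1 // ltW.
  by rewrite natrX -powR_mulrn // -powRrM mulrC powRrM powR_mulrn.
have dyadic J : \sum_(1 <= n < 2 ^ J) c n <= \sum_(j < J) r ^+ j.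
  elim: J => [|J IH]; first by rewrite big_ord0 expn0 big_geq.
  rewrite (@big_cat_nat _ _ _ (2 ^ J)) ?expn_gt0 ?leq_exp2l //=.
  by rewrite big_ord_recr /= lerD.
exists (1 - r)^-1 => N.
have -> : \sum_(i < N) ((i.+1)%:R : R) `^ (- q) = \sum_(1 <= n < N.+1) c n.
  by rewrite big_add1 /= big_mkord.
have geo : \sum_(j < N.+1) r ^+ j <= (1 - r)^-1 by apply: sum_geometric_le; rewrite r0 r1.
apply: le_trans geo; apply: le_trans (dyadic N.+1).
rewrite [X in _ <= X](@big_cat_nat _ _ _ N.+1) //=; last by rewrite ltnW // ltn_expl.
by rewrite lerDl sumr_ge0 // => n _; exact: powR_ge0.
Qed.

Lemma exprn_psum_powRN_bounded k p : k%:R < p -> exists Z, 0 <= Z /\ forall N,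
  (\sum_(i < N) ((i.+1)%:R : R) `^ (- (p / k%:R))) ^+ k <= Z.
Proof.
case: k => [|k] hp; first by exists 1; split => // N; rewrite expr0.
have q1 : 1 < p / k.+1%:R by rewrite ltr_pdivlMr ?ltr0n // mul1r.
have [Z hZ] := psum_powRN_bounded _ q1.
have Z0 : 0 <= Z by have := hZ 0%N; rewrite big_ord0.
exists (Z ^+ k.+1); split => [|N]; first exact: exprn_ge0.
apply: lerXn2r; rewrite ?nnegrE ?hZ //.
by apply: sumr_ge0 => i _; exact: powR_ge0.
Qed.

(* Splitting [Y^-p] into [k] equal factors, each controlled by one of the
   bounds [c j * m j <= Y]; the summand [L^-p] only serves the case [k = 0]. *)
Lemma powRN_le_prod k (c : 'I_k -> R) (m : 'I_k -> nat) (L Y p : R) :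
  (forall j, 0 < c j) -> 0 < L -> L <= Y -> 0 <= p ->
  (forall j, c j * (m j)%:R <= Y) -> (forall j, (0 < m j)%N) ->
  Y `^ (- p) <= (L `^ (- p) + \prod_(j < k) c j `^ (- (p / k%:R))) *
                \prod_(j < k) (m j)%:R `^ (- (p / k%:R)).
Proof.
move=> c0 L0 LY p0 hY hm; have Y0 : 0 < Y by exact: lt_le_trans LY.
case: k c m c0 hY hm => [|k] c m c0 hY hm.
  by rewrite !big_ord0 !mulr1; apply: le_trans (ler_powRN L0 LY p0) _; rewrite lerDl.
have -> : Y `^ (- p) = \prod_(j < k.+1) Y `^ (- (p / k.+1%:R)).
  by rewrite prod_powR_const ?ltW // mulNr divfK ?pnatr_eq0.
apply: (@le_trans _ _ (\prod_(j < k.+1)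
    (c j `^ (- (p / k.+1%:R)) * (m j)%:R `^ (- (p / k.+1%:R))))).
  apply: ler_prod => j _; rewrite powR_ge0 -powRM ?ler0n ?(ltW (c0 j)) //.
  by apply: ler_powRN; rewrite ?mulr_gt0 ?ltr0n ?divr_ge0 ?ler0n.
rewrite big_split /= ler_wpM2r ?lerDr ?powR_ge0 //.
by apply: prodr_ge0 => j _; exact: powR_ge0.
Qed.

End RealPowers.

Section BoxSums.
Local Close Scope classical_set_scope.
Context {R : realType}.

Definition widen_ffun {k N N'} (le : (N <= N')%N) (m : {ffun 'I_k -> 'I_N}) :
  {ffun 'I_k -> 'I_N'} := [ffun j => widen_ord le (m j)].

Lemma widen_ffun_inj k N N' (le : (N <= N')%N) : injective (@widen_ffun k N N' le).
Proof.
move=> m1 m2 /(congr1 (fun h : {ffun 'I_k -> 'I_N'} => fun j => val (h j))) E.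
apply/ffunP => j; apply/val_inj.
by have := congr1 (fun h => h j) E; rewrite /= !ffunE.
Qed.

Lemma ler_cmod_boxsumB k (g : ('I_k -> nat) -> R[i]) N N' : (N <= N')%N ->
  cmod (boxsum g N' - boxsum g N) <= boxsum_abs g N' - boxsum_abs g N.
Proof.
move=> le; pose S := [set @widen_ffun k N N' le m | m in predT].
have inS (T : nmodType) (G : {ffun 'I_k -> 'I_N'} -> T) :
    \sum_(m' in S) G m' = \sum_m G (widen_ffun le m).
  by rewrite big_imset // => x y _ _; exact: widen_ffun_inj.
have split_outS (T : zmodType) (G : ('I_k -> nat) -> T) :
    \sum_(m : {ffun 'I_k -> 'I_N'}) G (fun j => (m j).+1)
      - \sum_(m : {ffun 'I_k -> 'I_N}) G (fun j => (m j).+1)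
    = \sum_(m in ~: S) G (fun j => (m j).+1).
  rewrite (bigID (mem S)) /= inS.
  have -> : \sum_m G (fun j => (widen_ffun le m j : nat).+1) =
            \sum_(m : {ffun 'I_k -> 'I_N}) G (fun j => (m j).+1).
    by apply: eq_bigr => m _; congr G; apply: funext => j; rewrite ffunE.
  by rewrite addrAC subrr add0r; apply: eq_bigl => m; rewrite finset.in_setC.
rewrite /boxsum /boxsum_abs split_outS.
rewrite (split_outS _ (fun m => cmod (g m))).
exact: ler_cmod_sum.
Qed.

Definition fcons {k N} (i : 'I_N) (m : {ffun 'I_k -> 'I_N}) : {ffun 'I_k.+1 -> 'I_N} :=
  [ffun j => if unlift ord0 j is Some j' then m j' else i].

Lemma fcons0 k N (i : 'I_N) (m : {ffun 'I_k -> 'I_N}) : fcons i m ord0 = i.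
Proof. by rewrite ffunE unlift_none. Qed.

Lemma fconsS k N (i : 'I_N) (m : {ffun 'I_k -> 'I_N}) j : fcons i m (lift ord0 j) = m j.
Proof. by rewrite ffunE liftK. Qed.

Lemma sum_ffunS k N (F : {ffun 'I_k.+1 -> 'I_N} -> R[i]) :
  \sum_m F m = \sum_(i < N) \sum_(m : {ffun 'I_k -> 'I_N}) F (fcons i m).
Proof.
rewrite pair_big /=.
rewrite (reindex (fun m : {ffun 'I_k.+1 -> 'I_N} =>
                    (m ord0, [ffun j => m (lift ord0 j)]))) /=; last first.
  exists (fun p => fcons p.1 p.2) => [m _|[i m] _] /=.
    by apply/ffunP => j; rewrite ffunE; case: unliftP => [j' ->|->] //; rewrite ffunE.
  by rewrite fcons0; congr pair; apply/ffunP => j; rewrite ffunE fconsS.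
apply: eq_bigr => m _; congr F; apply/ffunP => j; rewrite ffunE.
by case: unliftP => [j' ->|->] //; rewrite ffunE.
Qed.

Lemma sum_ffun_prod k N (h : 'I_N -> R) :
  \sum_(m : {ffun 'I_k -> 'I_N}) \prod_(j < k) h (m j) = (\sum_(i < N) h i) ^+ k.
Proof.
by rewrite -(bigA_distr_bigA (fun (j : 'I_k) (i : 'I_N) => h i)) prodr_const card_ord.
Qed.

End BoxSums.

Section Quadrants.
Context {R : realType}.
Implicit Types (s : bool) (K L : R) (u v : R[i]).

Lemma sgn_cases s : sgn R s = 1 \/ sgn R s = -1.
Proof. by rewrite /sgn; case: s; [left | right]. Qed.

Lemma sgn_sqr s : sgn R s * sgn R s = 1.
Proof. by case: (sgn_cases s) => ->; rewrite ?mulr1 ?mulrNN ?mulr1. Qed.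

Lemma normr_sgn s : `|sgn R s| = 1.
Proof. by case: (sgn_cases s) => ->; rewrite ?normrN normr1. Qed.

Lemma QpmE s K L u : Qpm s K L u <-> Re u < - L /\ - K < sgn R s * Im u.
Proof. by rewrite /Qpm /sgn; case: s; rewrite ?mul1r ?mulN1r // ltrNl opprK. Qed.

Lemma sgn_Im_le_cmod s u : sgn R s * Im u <= cmod u.
Proof.
apply: le_trans (normIm_le_cmod u); case: (sgn_cases s) => ->.
  by rewrite mul1r ler_norm.
by rewrite mulN1r -normrN ler_norm.
Qed.

Lemma cmod_gt_of_Re_lt {L u} : Re u < - L -> L < cmod u.
Proof.
by move=> hRe; have := ler_norm (- Re u); rewrite normrN; have := normRe_le_cmod u; lra.
Qed.

(* Since [|Re v| > L], the constant [K] is absorbed by [(K / L) |v|]; and a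
   vertical move of length [y] away from the half-plane [s Im < -K] raises
   [|Im| + y] by at most a factor 2, up to [2 K]. *)
Lemma cmod_vshift_ge s K L (y : R) v : 0 <= K -> 0 < L -> Re v < - L ->
  - K < sgn R s * Im v -> 0 <= y ->
  cmod v + y <= (3 + 2 * K / L) * cmod (vshift v (sgn R s * y)).
Proof.
move=> K0 L0 hRe hIm y0; set w := vshift v _.
have hT : `|Im v| + y <= 2 * `|Im w| + 2 * K.
  rewrite Im_vshift; have n1 := ler_norm (Im v + sgn R s * y).
  have n2 := ler_norm (- (Im v + sgn R s * y)); rewrite normrN in n2.
  move: hIm n1 n2; case: (sgn_cases s) => -> hIm n1 n2;
    by case: (lerP 0 (Im v)) => h; [rewrite ger0_norm | rewrite ltr0_norm]; lra.
have h1 := normRe_le_cmod w; have h2 := normIm_le_cmod w.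
have h3 := cmod_le_normReIm v; rewrite Re_vshift in h1.
have hX : `|Re v| = - Re v by rewrite ltr0_norm //; lra.
rewrite hX in h1 h3.
have hq : 0 <= K / L by rewrite divr_ge0 // ltW.
have hKL : K <= K / L * (- Re v).
  have hRL : 0 <= - Re v - L by lra.
  by have := mulr_ge0 hq hRL; rewrite mulrBr divfK ?gt_eqF // subr_ge0.
have hKw : K / L * (- Re v) <= K / L * cmod w by rewrite ler_wpM2l.
rewrite !mulrDl -mulrA; lra.
Qed.

End Quadrants.

Definition height {R : realType} {k} (a : 'I_k -> R) (m : 'I_k -> nat) : R :=
  2 * pi * \sum_(j < k) a j * (m j)%:R - pi * \sum_(j < k) a j.

Lemma height_ge {R : realType} {k} {a : 'I_k -> R} {m} :
  (forall j, 0 < a j) -> (forall j, (0 < m j)%N) ->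
  pi * \sum_j a j <= height a m /\ forall j, pi * a j * (m j)%:R <= height a m.
Proof.
move=> ha hm; have hp := pi_gt0 R.
have S0 : 0 <= \sum_j a j by apply: sumr_ge0 => j _; exact: ltW.
have Sam : \sum_j a j <= \sum_j a j * (m j)%:R.
  by apply: ler_sum => j _; rewrite ler_pMr ?ha // ler1n.
have h1 : pi * \sum_j a j <= pi * \sum_j a j * (m j)%:R by rewrite ler_pM2l.
split; rewrite /height; first lra.
move=> j; have : a j * (m j)%:R <= \sum_j a j * (m j)%:R.
  rewrite (bigD1 j) //= lerDl; apply: sumr_ge0 => i _.
  by rewrite mulr_ge0 ?ler0n ?ltW.
by rewrite -(ler_pM2l hp) mulrA; lra.
Qed.

Lemma pi_sum_ge0 {R : realType} {k} {a : 'I_k -> R} :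
  (forall j, 0 < a j) -> 0 <= pi * \sum_j a j.
Proof. by move=> ha; rewrite mulr_ge0 ?pi_ge0 // sumr_ge0 // => j _; exact: ltW. Qed.

Section DifferenceOperators.
Context {R : realType} (s : bool).
Local Notation sg := (sgn R s).
Implicit Types (bs : seq R) (F G : R[i] -> R[i]).
Let sg_cases : sg = 1 \/ sg = -1 := sgn_cases s.

Lemma Deltas_cons b bs F : Deltas (b :: bs) F = Delta b (Deltas bs F).
Proof. by []. Qed.

Lemma Deltas_scale_sum bs (c : R[i]) N (t : nat -> R) G v :
  Deltas bs (fun x => c * \sum_(i < N) G (vshift x (t i))) v =
  c * \sum_(i < N) Deltas bs G (vshift v (t i)).
Proof.
elim: bs v => [|b bs IH] v //=.
rewrite DeltaE !IH -mulrBr -sumrB; congr (_ * _); apply: eq_bigr => i _.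
by rewrite DeltaE !vshiftD (addrC (t i)) (addrC (t i)).
Qed.

Lemma Im_vshift_Delta_ge b v : 0 <= b ->
  sg * Im v - pi * b <= sg * Im (vshift v (b * pi)) /\
  sg * Im v - pi * b <= sg * Im (vshift v (- (b * pi))).
Proof.
move=> b0; have pb : 0 <= pi * b by rewrite mulr_ge0 ?pi_ge0.
by rewrite !Im_vshift (mulrC b pi); case: sg_cases => ->; rewrite ?mul1r ?mulN1r; split; lra.
Qed.

Lemma cmod_Deltas_le {L : R} {bs G} {C eps t0 : R} :
  all (fun b => 0 <= b) bs -> 0 < t0 -> 0 <= eps -> 0 <= C ->
  (forall v : R[i], Re v < - L -> t0 <= sg * Im v -> cmod (G v) <= C * (sg * Im v) `^ (- eps)) ->
  forall v : R[i], Re v < - L -> t0 + pi * \sum_(b <- bs) b <= sg * Im v ->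
  cmod (Deltas bs G v) <=
    2 ^+ size bs * C * (sg * Im v - pi * \sum_(b <- bs) b) `^ (- eps).
Proof.
move=> + t00 e0 C0 hG; elim: bs => [|b bs IH] /=.
  by move=> _ v hRe; rewrite big_nil mulr0 addr0 subr0 expr0 mul1r; exact: hG.
case/andP=> b0 hbs v hRe hIm; have {}IH := IH hbs; rewrite big_cons in hIm *.
have Sbs : 0 <= \sum_(b <- bs) b.
  by rewrite big_seq; apply: sumr_ge0 => x /(allP hbs).
have ps : 0 <= pi * \sum_(b <- bs) b by rewrite mulr_ge0 ?pi_ge0.
set T := sg * Im v - pi * (b + \sum_(b <- bs) b).
have T0 : t0 <= T by rewrite /T mulrDr; lra.
have key w : Re w = Re v -> sg * Im v - pi * b <= sg * Im w ->
    cmod (Deltas bs G w) <= 2 ^+ size bs * C * T `^ (- eps).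
  move=> hw hw2; have h1 : t0 + pi * \sum_(b <- bs) b <= sg * Im w.
    by move: hw2 T0; rewrite /T mulrDr; lra.
  apply: (le_trans (IH _ _ h1)); first by rewrite hw.
  rewrite ler_wpM2l ?mulr_ge0 ?exprn_ge0 //.
  by apply: ler_powRN => //; move: hw2; rewrite /T mulrDr; lra.
have [up dn] := Im_vshift_Delta_ge b v b0.
rewrite DeltaE; apply: le_trans (ler_cmodD _ _) _.
rewrite cmodN exprS -!mulrA mulr2n mulrDl mul1r !mulrA.
by apply: lerD; apply: key; rewrite ?Re_vshift.
Qed.

Lemma cvg_Deltas {L t : R} {bs} {Gs : nat -> R[i] -> R[i]} {F} :
  all (fun b => 0 <= b) bs ->
  (forall x : R[i], Re x < - L -> t < sg * Im x -> (fun N => Gs N x) @ \oo --> F x) ->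
  forall v : R[i], Re v < - L -> t + pi * \sum_(b <- bs) b < sg * Im v ->
  (fun N => Deltas bs (Gs N) v) @ \oo --> Deltas bs F v.
Proof.
move=> + hG; elim: bs => [|b bs IH] /=.
  by move=> _ v hRe; rewrite big_nil mulr0 addr0; exact: hG.
case/andP=> b0 /IH {}IH v hRe hIm; rewrite big_cons mulrDr in hIm.
have [up dn] := Im_vshift_Delta_ge b v b0.
rewrite DeltaE; under eq_fun do rewrite DeltaE.
by apply: cvgB; apply: IH; rewrite ?Re_vshift //; lra.
Qed.

Definition step_height (b : R) (n : nat) : R := sg * (2 * pi * b * n.+1%:R - pi * b).

Lemma Delta_telescope (Phi : R[i] -> R[i]) b N u :
  Delta b (fun v => (- sg)%:C * \sum_(i < N) Phi (vshift v (step_height b i))) u =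
  Phi u - Phi (vshift u (sg * (2 * pi * b * N%:R))).
Proof.
pose X n := Phi (vshift u (sg * (2 * pi * b * n%:R))).
have step (i : 'I_N) : Phi (vshift (vshift u (b * pi)) (step_height b i)) -
    Phi (vshift (vshift u (- (b * pi))) (step_height b i)) = sg%:C * (X i.+1 - X i).
  rewrite /X /step_height !vshiftD -[(i.+1)%:R]natr1.
  case: sg_cases => ->; rewrite ?rmorphN (rmorph1 (real_complex R)) ?mulN1r ?mul1r ?opprB;
    by congr (Phi (vshift u _) - Phi (vshift u _)); ring.
have sg2 : (- sg)%:C * sg%:C = -1 :> R[i].
  by rewrite -rmorphM /= mulNr sgn_sqr rmorphN (rmorph1 (real_complex R)).
rewrite DeltaE /= -mulrBr -sumrB (eq_bigr _ (fun i _ => step i)) -mulr_sumr.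
rewrite -(big_mkord xpredT (fun i => X i.+1 - X i)) telescope_sumr // (mulrA (- sg)%:C) sg2.
by rewrite mulN1r opprB /X mulr0 mulr0 vshift0.
Qed.

End DifferenceOperators.

Section Series.
Context {R : realType} {K L A M : R} {s : bool} {f : R[i] -> R[i]}.
Hypotheses (hK : 0 < K) (hL : 0 < L) (hM : 0 <= M).
Hypothesis hf : forall u, Qpm s K L u -> cmod (f u) <= M * cmod u `^ (- A).
Local Notation sg := (sgn R s).

Lemma termE k (a : 'I_k -> R) u m :
  term a s f u m = ((- sg) ^+ k)%:C * f (vshift u (sg * height a m)).
Proof.
rewrite /term /vshift; congr (_ * f _); rewrite /height -addrA; congr (_ + _).
by rewrite -mulrBl -rmorphB /=; congr (_%:C * _); ring.
Qed.

Lemma cmod_term_le {k} {a : 'I_k -> R} {K' B : R} :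
  (forall j, 0 < a j) -> 0 <= K' -> K' <= K + pi * \sum_j a j -> 0 <= B -> B < A ->
  exists C, 0 <= C /\ forall (x : R[i]) m, Re x < - L -> - K' < sg * Im x ->
    (forall j, (0 < m j)%N) ->
    cmod (term a s f x m) <=
      C * cmod x `^ (- B) * \prod_(j < k) (m j)%:R `^ (- ((A - B) / k%:R)).
Proof.
move=> ha K0 KK B0 BA; set c := 3 + 2 * K' / L.
have c0 : 0 < c.
  have : 0 <= 2 * K' / L by rewrite divr_ge0 ?mulr_ge0 // ltW.
  rewrite /c; lra.
set G := c^-1 `^ (- A).
set D := L `^ (- (A - B)) + \prod_(j < k) (pi * a j) `^ (- ((A - B) / k%:R)).
have G0 : 0 <= G by exact: powR_ge0.
have D0 : 0 <= D by rewrite addr_ge0 ?powR_ge0 // prodr_ge0 // => j _; exact: powR_ge0.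
exists (M * G * D); split=> [|x m hRe hIm hm]; first by rewrite !mulr_ge0.
rewrite termE cmodM cmodC normrX normrN normr_sgn expr1n mul1r.
have [y0 hy] := height_ge ha hm; move: (height a m) y0 hy => y y0 hy.
have hp := pi_gt0 R.
have py : 0 <= pi * \sum_j a j := pi_sum_ge0 ha.
set w := vshift x (sg * y); set P := \prod_(j < k) _.
have wQ : Qpm s K L w.
  by apply/QpmE; rewrite Re_vshift Im_vshift mulrDr mulrA sgn_sqr mul1r; lra.
have cx : L < cmod x := cmod_gt_of_Re_lt hRe.
have y_ge0 : 0 <= y := le_trans py y0.
have cx0 : 0 < cmod x := lt_trans hL cx.
have xY : cmod x <= cmod x + y by rewrite lerDl.
have Y0 : 0 < cmod x + y := lt_le_trans cx0 xY.
have cw : (cmod x + y) * c^-1 <= cmod w.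
  by rewrite ler_pdivrMr // mulrC; apply: cmod_vshift_ge => //; lra.
have E1 : cmod w `^ (- A) <= (cmod x + y) `^ (- A) * G.
  rewrite /G -powRM ?invr_ge0 ?(ltW c0) ?(ltW Y0) //.
  by apply: ler_powRN; rewrite ?mulr_gt0 ?invr_gt0 //; lra.
have E2 : (cmod x + y) `^ (- A) <= cmod x `^ (- B) * (D * P).
  have -> : - A = - B + - (A - B) by ring.
  rewrite powRD ?(gt_eqF Y0) ?implybT //.
  apply: ler_pM; rewrite ?powR_ge0 //; first exact: ler_powRN.
  have hc j : 0 < pi * a j by rewrite mulr_gt0.
  have hY j : pi * a j * (m j)%:R <= cmod x + y.
    by apply: le_trans (hy j) _; rewrite lerDr cmod_ge0.
  rewrite /D /P; apply: powRN_le_prod hc hL (le_trans (ltW cx) xY) _ hY hm.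
  by rewrite subr_ge0 ltW.
apply: (le_trans (hf _ wQ)).
have -> : M * G * D * cmod x `^ (- B) * P = M * (cmod x `^ (- B) * (D * P) * G) by ring.
by apply: (ler_wpM2l hM); apply: le_trans E1 _; apply: ler_wpM2r.
Qed.

Lemma boxsum_abs_le {k} {a : 'I_k -> R} {K' B : R} :
  (forall j, 0 < a j) -> 0 <= K' -> K' <= K + pi * \sum_j a j -> 0 <= B ->
  B < A - k%:R ->
  exists C, 0 <= C /\ forall x : R[i], Re x < - L -> - K' < sg * Im x ->
    forall N, boxsum_abs (term a s f x) N <= C * cmod x `^ (- B).
Proof.
move=> ha K0 KK B0 BA.
have BA' : B < A by have := ler0n R k; lra.
have [C [C0 hC]] := cmod_term_le ha K0 KK B0 BA'.
have kp : k%:R < A - B by lra.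
have [Z [Z0 hZ]] := exprn_psum_powRN_bounded _ _ kp.
exists (C * Z); split=> [|x hRe hIm N]; first exact: mulr_ge0.
set q := (A - B) / k%:R.
apply: (@le_trans _ _ (\sum_(m : {ffun 'I_k -> 'I_N})
   C * cmod x `^ (- B) * \prod_(j < k) ((m j).+1%:R `^ (- q)))).
  by apply: ler_sum => m _; apply: hC.
rewrite -mulr_sumr (sum_ffun_prod k N (fun i : 'I_N => (i.+1%:R : R) `^ (- q))).
by rewrite [X in _ <= X]mulrAC ler_wpM2l ?mulr_ge0 ?powR_ge0.
Qed.

Lemma boxsum_cvg {k} {a : 'I_k -> R} {K' : R} {x : R[i]} :
  (forall j, 0 < a j) -> 0 <= K' -> K' <= K + pi * \sum_j a j ->
  k%:R < A -> Re x < - L -> - K' < sg * Im x ->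
  cvgn (boxsum (term a s f x)) /\ cvgn (boxsum_abs (term a s f x)).
Proof.
move=> ha K0 KK kA hRe hIm; set g := term a s f x.
have Ak : 0 < A - k%:R by rewrite subr_gt0.
have [C [C0 hC]] := boxsum_abs_le ha K0 KK (lexx 0) Ak.
have bnd : exists Bd, forall N, boxsum_abs g N <= Bd.
  by exists C => N; have := hC _ hRe hIm N; rewrite oppr0 powRr0 mulr1.
have dif N N' : (N <= N')%N -> cmod (boxsum g N' - boxsum g N) <= boxsum_abs g N' - boxsum_abs g N.
  exact: ler_cmod_boxsumB.
have cRe : cvgn (fun N => Re (boxsum g N)).
  apply: (cvgn_dominated_increments _ _ _ bnd) => N N' /dif.
  by rewrite -ReB; apply: le_trans (normRe_le_cmod _).
have cIm : cvgn (fun N => Im (boxsum g N)).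
  apply: (cvgn_dominated_increments _ _ _ bnd) => N N' /dif.
  by rewrite -ImB; apply: le_trans (normIm_le_cmod _).
split; first exact: cvgP (cvgn_ReIm _ _ _ cRe cIm).
apply: (cvgn_dominated_increments _ _ _ bnd) => N N' /dif h.
by rewrite ger0_norm // (le_trans (cmod_ge0 _) h).
Qed.

Lemma cmod_Fpm_le {k} {a : 'I_k -> R} {B : R} :
  (forall j, 0 < a j) -> k%:R < A -> B < A - k%:R ->
  exists M', forall u, Qpm s K L u -> cmod (Fpm a s f u) <= M' * cmod u `^ (- B).
Proof.
move=> ha kA BA; set B0 := Num.max B 0.
have B00 : 0 <= B0 by rewrite le_max lexx orbT.
have B0A : B0 < A - k%:R by rewrite gt_max BA subr_gt0.
have BB0 : B <= B0 by rewrite le_max lexx.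
have KK : K <= K + pi * \sum_j a j by rewrite lerDl pi_sum_ge0.
have [C [C0 hC]] := boxsum_abs_le ha (ltW hK) KK B00 B0A.
exists (C * L `^ (- (B0 - B))) => u /QpmE [hRe hIm].
have [cv _] := boxsum_cvg ha (ltW hK) KK kA hRe hIm.
have cu : L < cmod u := cmod_gt_of_Re_lt hRe.
have cu0 : 0 < cmod u := lt_trans hL cu.
have hF : cmod (Fpm a s f u) <= C * cmod u `^ (- B0).
  apply: (cmod_limn_le _ _ _ cv) => N.
  exact: le_trans (ler_cmod_sum _ _ _) (hC _ hRe hIm N).
apply: le_trans hF _.
have -> : - B0 = - B + - (B0 - B) by ring.
rewrite powRD ?(gt_eqF cu0) ?implybT // mulrA [X in _ <= X]mulrAC.
apply: ler_wpM2l; first by rewrite mulr_ge0 ?powR_ge0.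
by apply: ler_powRN; rewrite ?subr_ge0 // ltW.
Qed.

Lemma term_recl k (a : 'I_k.+1 -> R) u N (i : 'I_N) (m : {ffun 'I_k -> 'I_N}) :
  term a s f u (fun j => (fcons i m j).+1) =
  (- sg)%:C * term (fun j => a (lift ord0 j)) s f
                   (vshift u (step_height s (a ord0) i)) (fun j => (m j).+1).
Proof.
rewrite !termE exprS rmorphM /= -mulrA vshiftD; congr (_ * (_ * f (vshift u _))).
rewrite /height /step_height !big_ord_recl fcons0.
under eq_bigr do rewrite fconsS.
ring.
Qed.

Lemma boxsum_recl k (a : 'I_k.+1 -> R) N :
  (fun v => boxsum (term a s f v) N) =
  fun v => (- sg)%:C * \sum_(i < N) boxsum
    (term (fun j => a (lift ord0 j)) s f (vshift v (step_height s (a ord0) i))) N.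
Proof.
apply: funext => v; rewrite /boxsum sum_ffunS mulr_sumr; apply: eq_bigr => i _.
by rewrite mulr_sumr; apply: eq_bigr => m _; exact: term_recl.
Qed.

(* Far up (or down) the strip the partial sums, and hence their differences,
   are uniformly small; the exponent [(A - k) / 2] only needs to be positive. *)
Lemma Deltas_boxsum_shift_vanish {k} {a : 'I_k -> R} {b : R} {u : R[i]} :
  (forall j, 0 < a j) -> k%:R < A -> 0 < b -> Re u < - L ->
  (fun N => Deltas [seq a j | j <- enum 'I_k] (fun v => boxsum (term a s f v) N)
              (vshift u (sg * (2 * pi * b * N%:R)))) @ \oo --> 0.
Proof.
move=> ha kA b0 hRe; apply/cvgn_cmodP => e e0.
set B := (A - k%:R) / 2.
have B0 : 0 < B by rewrite divr_gt0 // subr_gt0.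
have BA : B < A - k%:R by rewrite ltr_pdivrMr //; lra.
have KK : K <= K + pi * \sum_j a j by rewrite lerDl pi_sum_ge0.
have [C [C0 hC]] := boxsum_abs_le ha (ltW hK) KK (ltW B0) BA.
set bs := [seq a j | j <- enum 'I_k].
have bs0 : all (fun b => 0 <= b) bs by apply/allP => x /mapP [j _ ->]; exact: ltW.
have hG N (v : R[i]) : Re v < - L -> 1 <= sg * Im v ->
    cmod (boxsum (term a s f v) N) <= C * (sg * Im v) `^ (- B).
  move=> hv1 hv2; have hv0 : 0 < sg * Im v := lt_le_trans ltr01 hv2.
  have hv3 : - K < sg * Im v by apply: lt_trans hv0; rewrite oppr_lt0.
  apply: (le_trans (ler_cmod_sum _ _ _)); apply: (le_trans (hC _ hv1 hv3 N)).
  apply: (ler_wpM2l C0); apply: ler_powRN; [exact: hv0 | exact: sgn_Im_le_cmod | exact: ltW].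
set S := \sum_(b <- bs) b; set c := 2 ^+ size bs * C.
have c0 : 0 <= c by rewrite mulr_ge0 ?exprn_ge0.
have e1 : 0 < e / (c + 1) by rewrite divr_gt0 //; lra.
have [T0 [T00 hT0]] := powRN_small _ _ B0 e1.
have pb : 0 < 2 * pi * b by rewrite !mulr_gt0 ?pi_gt0.
apply: filterS (nbhs_infty_ger ((T0 + 1 + pi * S - sg * Im u) / (2 * pi * b))) => N.
rewrite ler_pdivrMr // => hN.
set x := vshift u _.
have Ix : sg * Im x = sg * Im u + 2 * pi * b * N%:R.
  by rewrite /x Im_vshift mulrDr mulrA sgn_sqr mul1r.
have Rx : Re x < - L by rewrite /x Re_vshift.
have hx : 1 + pi * S <= sg * Im x by rewrite Ix; lra.
have hT : T0 <= sg * Im x - pi * S by rewrite Ix; lra.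
rewrite sub0r cmodN; apply: (le_lt_trans (cmod_Deltas_le _ bs0 ltr01 (ltW B0) C0 (hG N) _ Rx hx)).
apply: (le_lt_trans (ler_wpM2l c0 (hT0 _ hT))).
have q1 : c / (c + 1) < 1 by rewrite ltr_pdivrMr; lra.
have -> : c * (e / (c + 1)) = e * (c / (c + 1)) by ring.
by rewrite -[X in _ < X]mulr1 ltr_pM2l.
Qed.

Lemma Deltas_boxsum_cvg k : k%:R < A -> forall a : 'I_k -> R, (forall j, 0 < a j) ->
  forall u, Qpm s K L u ->
  (fun N => Deltas [seq a j | j <- enum 'I_k] (fun v => boxsum (term a s f v) N) u)
    @ \oo --> f u.
Proof.
elim: k => [|k IH] kA a ha u uQ.
  have -> : (fun N => Deltas [seq a j | j <- enum 'I_0]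
                (fun v => boxsum (term a s f v) N) u) = fun _ => f u.
    apply: funext => N; rewrite enum_ord0 /= /boxsum.
    rewrite (eq_bigr (fun _ => f u)); last first.
      move=> m _; rewrite termE expr0 mul1r /height !big_ord0 !mulr0 subrr mulr0.
      by rewrite vshift0.
    by rewrite sumr_const card_ffun !card_ord expn0 mulr1n.
  exact: cvg_cst.
have kA' : k%:R < A by apply: lt_trans kA; rewrite ltr_nat.
set a' := fun j => a (lift ord0 j).
have ha' j : 0 < a' j by exact: ha.
set bs' := [seq a' j | j <- enum 'I_k].
have Emap : [seq a j | j <- enum 'I_k.+1] = a ord0 :: bs'.
  by rewrite enum_ordSl /= -map_comp.
set Phi := fun N => Deltas bs' (fun v => boxsum (term a' s f v) N).
have E N : Deltas [seq a j | j <- enum 'I_k.+1] (fun v => boxsum (term a s f v) N) u =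
    Phi N u - Phi N (vshift u (sg * (2 * pi * a ord0 * N%:R))).
  have DS : Deltas bs' (fun v => (- sg)%:C * \sum_(i < N)
      boxsum (term a' s f (vshift v (step_height s (a ord0) i))) N) =
      fun v => (- sg)%:C * \sum_(i < N) Phi N (vshift v (step_height s (a ord0) i)).
    by apply: funext => v; exact: Deltas_scale_sum.
  by rewrite Emap Deltas_cons boxsum_recl -/a' DS Delta_telescope.
have -> : (fun N => Deltas [seq a j | j <- enum 'I_k.+1]
             (fun v => boxsum (term a s f v) N) u) =
          (fun N => Phi N u) - (fun N => Phi N (vshift u (sg * (2 * pi * a ord0 * N%:R)))).
  by apply: funext => N; rewrite E.
rewrite -[f u]subr0; apply: cvgB; first exact: IH.
by case/QpmE: uQ => hRe _; exact: Deltas_boxsum_shift_vanish.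
Qed.

(* The points where [Deltas] evaluates [Fpm] leave [Q_pm] by at most
   [pi * \sum_j a j] vertically; the series still converges there. *)
Lemma Deltas_Fpm {k} {a : 'I_k -> R} : (forall j, 0 < a j) -> k%:R < A ->
  forall u, Qpm s K L u -> Deltas [seq a j | j <- enum 'I_k] (Fpm a s f) u = f u.
Proof.
move=> ha kA u uQ; have [hRe hIm] := iffLR (QpmE s K L u) uQ.
set bs := [seq a j | j <- enum 'I_k].
have bs0 : all (fun b => 0 <= b) bs by apply/allP => x /mapP [j _ ->]; exact: ltW.
have S0 := pi_sum_ge0 ha.
have hconv (x : R[i]) : Re x < - L -> - K - pi * \sum_j a j < sg * Im x ->
    (fun N => boxsum (term a s f x) N) @ \oo --> Fpm a s f x.
  move=> hx1 hx2; have K0 : 0 <= K + pi * \sum_j a j by rewrite addr_ge0 // ltW.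
  have hx2' : - (K + pi * \sum_j a j) < sg * Im x by rewrite opprD.
  exact: (boxsum_cvg ha K0 (lexx _) kA hx1 hx2').1.
have hIm' : - K - pi * \sum_j a j + pi * \sum_(b <- bs) b < sg * Im u.
  by rewrite big_map big_enum /=; lra.
have h1 := Deltas_boxsum_cvg _ kA _ ha _ uQ.
have h2 := cvg_Deltas s bs0 hconv _ hRe hIm'.
apply: (cvg_unique _ h2 h1); exact: norm_hausdorff.
Qed.

End Series.

Theorem lemma14 (R : realType) (k : nat) (a : 'I_k -> R) (K L A : R)
    (s : bool) (f : R[i] -> R[i]) :
  (forall j, 0 < a j) -> 0 < K -> 0 < L ->
  (forall z, Qpm s K L z -> derivable f z 1) ->
  (exists M : R, forall u, Qpm s K L u -> cmod (f u) <= M * cmod u `^ (- A)) ->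
  k%:R < A ->
  (forall u, Qpm s K L u ->
     cvgn (boxsum (term a s f u)) /\ cvgn (boxsum_abs (term a s f u))) /\
  (forall u, Qpm s K L u ->
     Deltas [seq a j | j <- enum 'I_k] (Fpm a s f) u = f u) /\
  (forall B : R, B < A - k%:R ->
     exists M' : R, forall u, Qpm s K L u ->
       cmod (Fpm a s f u) <= M' * cmod u `^ (- B)).
Proof.
move=> ha hK hL _ [M hM] kA.
pose M0 := Num.max M 0.
have hM0 : 0 <= M0 by rewrite le_max lexx orbT.
have hfM0 u : Qpm s K L u -> cmod (f u) <= M0 * cmod u `^ (- A).
  move=> hu; apply: (le_trans (hM u hu)); apply: ler_wpM2r; first exact: powR_ge0.
  by rewrite le_max lexx.
have KK : K <= K + pi * \sum_j a j by rewrite lerDl pi_sum_ge0.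
split; [|split].
- move=> u /QpmE [hRe hIm].
  exact: (boxsum_cvg (M := M0) hL hM0 hfM0 ha (ltW hK) KK kA hRe hIm).
- exact: (Deltas_Fpm (M := M0) hK hL hM0 hfM0 ha kA).
- move=> B BA; exact: (cmod_Fpm_le (M := M0) hK hL hM0 hfM0 ha kA BA).
Qed.
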